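(* Let $n\ge1$, $s_1\ge1$, let $P$ be any distribution on $[n]$ and let $U_n$ be the uniform distribution on $[n]$. For a multiset $\mathcal S$ of $s_1$ i.i.d. samples, let $S$ be the set of distinct elements of $\mathcal S$ and $U_n(S)=|S|/n$. Then for every $t\in\mathbb R$, $$\Pr_{\mathcal S\sim P^{\otimes s_1}}\big[U_n(S)\ge t\big]\le \Pr_{\mathcal S\sim U_n^{\otimes s_1}}\big[U_n(S)\ge t\big].$$
   Context: $P^{\otimes s_1}$ denotes drawing $s_1$ independent samples from $P$. *)

From mathcomp Require Import all_boot all_order all_algebra.
Set Implicit Arguments. Unset Strict Implicit. Unset Printing Implicit Defensive.
Import Order.TTheory GRing.Theory Num.Theory.
Local Open Scope ring_scope.

Definition is_distr (R : realFieldType) (n : nat) (P : 'I_n -> R) : Prop :=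
  (forall i, 0 <= P i) /\ \sum_(i < n) P i = 1.

Definition unif (R : realFieldType) (n : nat) : 'I_n -> R := fun _ => n%:R^-1.

(* Probability of an event E on s i.i.d. samples from P (the product
   distribution P^{\otimes s}); a sample is a function 'I_s -> 'I_n. *)
Definition prob_iid (R : realFieldType) (n s : nat) (P : 'I_n -> R)
  (E : pred {ffun 'I_s -> 'I_n}) : R :=
  \sum_(w : {ffun 'I_s -> 'I_n} | E w) \prod_(j < s) P (w j).

Definition sample_set (n s : nat) (w : {ffun 'I_s -> 'I_n}) : {set 'I_n} :=
  [set w j | j : 'I_s].

Definition Un_mass (R : realFieldType) (n : nat) (S : {set 'I_n}) : R :=
  #|S|%:R / n%:R.

From mathcomp Require Import all_boot all_order all_algebra.
Import Order.TTheory GRing.Theory Num.Theory.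
Set Implicit Arguments. Unset Strict Implicit. Unset Printing Implicit Defensive.
Local Open Scope ring_scope.

(* If P is not uniform, pick a with P a > 1/n > P b and replace the pair
   (P a, P b) by (1/n, P a + P b - 1/n): the total mass is unchanged and one
   more coordinate becomes uniform, so it suffices that such a pinch never
   decreases the probability of an upward-closed event on |S|.  Couple the two
   sample laws through the map merging b into a.  A fibre over a merged sample
   v has the same mass under both laws, and its samples have |S| = |S(v)| + 1
   exactly when they hit both a and b.  The samples of the fibre missing a or
   b are v and v with every a replaced by b, of total mass (p_a^m + p_b^m) c,
   m being the number of a's in v; by the power inequality this mass shrinks
   when the pair is pinched. *)

Lemma ler_subXD (R : numDomainType) (x y d : R) (m : nat) :
  0 <= d -> 0 <= x -> x <= y -> (x + d) ^+ m - x ^+ m <= (y + d) ^+ m - y ^+ m.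
Proof.
move=> d0 x0 xy; have y0 : 0 <= y by apply: le_trans xy.
rewrite !subrXX [x + d]addrC [y + d]addrC !addrK; apply: ler_wpM2l => //.
apply: ler_sum => i _; apply: ler_pM; rewrite ?exprn_ge0 ?addr_ge0 //.
  by apply: lerXn2r; rewrite ?nnegrE ?addr_ge0 // lerD2l.
by apply: lerXn2r; rewrite ?nnegrE.
Qed.

Lemma ler_exprD_pinch (R : numDomainType) (x y z : R) (m : nat) :
  0 <= y -> y <= z -> z <= x -> z ^+ m + (x + y - z) ^+ m <= x ^+ m + y ^+ m.
Proof.
move=> y0 yz zx.
have xz0 : 0 <= x - z by rewrite subr_ge0.
have := ler_subXD m xz0 y0 yz.
rewrite [z + _]addrC subrK [y + _]addrC addrAC.
by rewrite lerBrDl addrA lerBlDr [x ^+ m + _]addrC.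
Qed.

Lemma exists_ltr_of_sum_eq (R : realDomainType) (I : finType) (F G : I -> R) (i0 : I) :
  \sum_i F i = \sum_i G i -> F i0 != G i0 -> exists i, F i < G i.
Proof.
move=> eqFG neq0; apply/existsP; apply: contraLR neq0 => /existsPn ltFG.
have GleF i : G i <= F i by rewrite leNgt ltFG.
rewrite negbK eq_le GleF andbT leNgt; apply/negP => lt0.
move: eqFG; rewrite (bigD1 i0) // [RHS](bigD1 i0) //= => eqFG.
have : G i0 + \sum_(i | i != i0) G i < F i0 + \sum_(i | i != i0) F i.
  by apply: ltr_leD => //; apply: ler_sum.
by rewrite eqFG ltxx.
Qed.

Section MergeSamples.
Variables (n s : nat) (a b : 'I_n).
Hypothesis neq_ab : a != b.

Definition merge (i : 'I_n) : 'I_n := if i == b then a else i.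

Lemma merge_neq i : merge i != b.
Proof. by rewrite /merge; case: (eqVneq i b). Qed.

Lemma card_merge_imset (S : {set 'I_n}) :
  #|S| = (#|merge @: S| + (a \in S) && (b \in S))%N.
Proof.
case bS: (b \in S); last first.
  rewrite andbF addn0 card_in_imset // => i j iS jS.
  have notb k : k \in S -> k != b by move=> kS; apply: contraFneq bS => <-.
  by rewrite /merge (negbTE (notb i iS)) (negbTE (notb j jS)).
have -> : merge @: S = a |: (S :\ b).
  apply/setP => i; rewrite !inE; apply/imsetP/orP.
    by case=> j jS ->; rewrite /merge; case: (eqVneq j b) => jb; [left | right; apply/andP].
  case=> [/eqP -> | /andP [ib iS]]; first by exists b; rewrite /merge ?eqxx.
  by exists i => //; rewrite /merge (negbTE ib).
rewrite cardsU1 (cardsD1 b S) bS andbT !inE neq_ab /=.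
by case: (a \in S); rewrite ?addn0 ?addn1.
Qed.

Lemma sum_merge_eq (R : nmodType) (r : 'I_n -> R) (c : 'I_n) : c != b ->
  \sum_(i | merge i == c) r i = if c == a then r a + r b else r c.
Proof.
move=> cb; case: (eqVneq c a) => [-> | ca].
  rewrite (bigD1 a) /=; last by rewrite /merge (negbTE neq_ab).
  congr (_ + _); apply: big_pred1 => i /=; rewrite /merge.
  by case: (eqVneq i b) => [-> | ib]; rewrite ?eqxx ?andbN // eq_sym.
apply: big_pred1 => i /=; rewrite /merge.
by case: (eqVneq i b) => [-> | //]; rewrite eq_sym (negbTE ca) eq_sym (negbTE cb).
Qed.

Definition merge_sample (w : {ffun 'I_s -> 'I_n}) : {ffun 'I_s -> 'I_n} :=
  [ffun j => merge (w j)].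

Definition a_to_b (v : {ffun 'I_s -> 'I_n}) : {ffun 'I_s -> 'I_n} :=
  [ffun j => if v j == a then b else v j].

Lemma sample_set_merge w : sample_set (merge_sample w) = merge @: sample_set w.
Proof. by rewrite /sample_set -imset_comp; apply: eq_imset => j; rewrite ffunE. Qed.

Lemma notin_sample_set_merge w : b \notin sample_set (merge_sample w).
Proof.
rewrite sample_set_merge; apply/imsetP => -[i _ /eqP].
by rewrite eq_sym (negbTE (merge_neq i)).
Qed.

Lemma neq_notin_sample_set (w : {ffun 'I_s -> 'I_n}) j x :
  x \notin sample_set w -> w j != x.
Proof. by apply: contraNneq => <-; exact: imset_f. Qed.

Lemma merge_sample_id v : b \notin sample_set v -> merge_sample v = v.
Proof.
move=> bv; apply/ffunP => j; rewrite ffunE /merge.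
by case: eqVneq => // vjb; rewrite -vjb imset_f in bv.
Qed.

Lemma merge_sample_a_to_b v : b \notin sample_set v -> merge_sample (a_to_b v) = v.
Proof.
move=> bv; rewrite -[RHS](merge_sample_id bv); apply/ffunP => j; rewrite !ffunE.
by case: eqVneq => [-> | //]; rewrite /merge eqxx (negbTE neq_ab).
Qed.

Lemma a_notin_a_to_b v : a \notin sample_set (a_to_b v).
Proof.
apply/imsetP => -[j _]; rewrite ffunE; case: eqVneq => [_ | vja aE].
  by move/eqP; rewrite (negbTE neq_ab).
by rewrite aE eqxx in vja.
Qed.

Lemma a_to_b_neq v : a \in sample_set v -> a_to_b v != v.
Proof. by move=> av; apply: contraTneq av => <-; exact: a_notin_a_to_b. Qed.

Lemma merge_sample_missing w : ~~ ((a \in sample_set w) && (b \in sample_set w)) ->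
  w = merge_sample w \/ w = a_to_b (merge_sample w).
Proof.
rewrite negb_and => /orP [aw | bw]; [right | left]; apply/ffunP => j; rewrite !ffunE /merge.
  case: (eqVneq (w j) b) => [-> | wjb]; rewrite ?eqxx //.
  by case: eqVneq => // wja; rewrite -wja imset_f in aw.
by case: eqVneq => // wjb; rewrite -wjb imset_f in bw.
Qed.

Lemma b_notin_fibre w : a \notin sample_set (merge_sample w) -> b \notin sample_set w.
Proof.
apply: contra => /imsetP [j _ wjb]; apply/imsetP; exists j => //.
by rewrite ffunE -wjb /merge eqxx.
Qed.

Lemma sum_fibre_prod (R : pzSemiRingType) (r : 'I_n -> R) v : b \notin sample_set v ->
  \sum_(w | merge_sample w == v) \prod_j r (w j) =
  \prod_j (if v j == a then r a + r b else r (v j)).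
Proof.
move=> bv; transitivity (\prod_j \sum_(i | merge i == v j) r i); last first.
  by apply: eq_bigr => j _; rewrite sum_merge_eq // neq_notin_sample_set.
rewrite bigA_distr_big_dep; apply: eq_bigl => w.
apply/eqP/familyP => [<- j | wv]; first by rewrite unfold_in ffunE.
by apply/ffunP => j; rewrite ffunE; apply/eqP; have := wv j; rewrite unfold_in.
Qed.

Lemma sum_fibre_both (R : zmodType) (F : {ffun 'I_s -> 'I_n} -> R) v :
  b \notin sample_set v -> a \in sample_set v ->
  \sum_(w | merge_sample w == v)
     (if (a \in sample_set w) && (b \in sample_set w) then F w else 0) =
  \sum_(w | merge_sample w == v) F w - (F v + F (a_to_b v)).
Proof.
move=> bv av.
have splitE (G : {ffun 'I_s -> 'I_n} -> R) : \sum_(w | merge_sample w == v) G w =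
    G v + G (a_to_b v) + \sum_(w | [&& merge_sample w == v, w != v & w != a_to_b v]) G w.
  rewrite (bigD1 v) ?merge_sample_id //= (bigD1 (a_to_b v)) /=; last first.
    by rewrite merge_sample_a_to_b ?eqxx ?a_to_b_neq.
  by rewrite addrA; congr (_ + _); apply: eq_bigl => w; rewrite andbA.
rewrite !splitE (negbTE bv) (negbTE (a_notin_a_to_b v)) andbF !add0r addrAC subrr add0r.
apply: eq_bigr => w /and3P [/eqP wv nv nab]; case: ifP => // /negbT.
by case/merge_sample_missing; rewrite wv => eqw; rewrite eqw eqxx ?andbF in nv nab.
Qed.

Lemma prod_replace_a (R : comPzSemiRingType) (r : 'I_n -> R) (v : 'I_s -> 'I_n) c :
  \prod_j r (if v j == a then c else v j) =
  r c ^+ #|[pred j | v j == a]| * \prod_(j | v j != a) r (v j).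
Proof.
rewrite (bigID (fun j => v j == a)) /= -prodr_const.
by congr (_ * _); apply: eq_bigr => j; [move=> -> | move/negbTE ->].
Qed.

Section Smoothing.
Variables (R : realFieldType) (phi : nat -> bool).
Hypothesis phi_up : forall k l, (k <= l)%N -> phi k -> phi l.
Variables (p q : 'I_n -> R).
Hypotheses (p_ge0 : forall i, 0 <= p i) (q_eq : forall i, i != a -> i != b -> q i = p i).
Hypotheses (qD : q a + q b = p a + p b)
  (qX : forall m, q a ^+ m + q b ^+ m <= p a ^+ m + p b ^+ m).

Let event_mass (r : 'I_n -> R) (w : {ffun 'I_s -> 'I_n}) :=
  if phi #|sample_set w| then \prod_j r (w j) else 0.

Lemma sum_fibre_prod_preserved v : b \notin sample_set v ->
  \sum_(w | merge_sample w == v) \prod_j q (w j) =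
  \sum_(w | merge_sample w == v) \prod_j p (w j).
Proof.
move=> bv; rewrite !sum_fibre_prod // qD; apply: eq_bigr => j _.
by case: ifP => // /negbT vja; rewrite q_eq // neq_notin_sample_set.
Qed.

Lemma fibre_event_le v : b \notin sample_set v ->
  \sum_(w | merge_sample w == v) event_mass p w <=
  \sum_(w | merge_sample w == v) event_mass q w.
Proof.
move=> bv; set k := #|sample_set v|.
have cardE w : merge_sample w == v ->
    #|sample_set w| = (k + (a \in sample_set w) && (b \in sample_set w))%N.
  by move/eqP => wv; rewrite /k -wv sample_set_merge; exact: card_merge_imset.
have [phik | nphik] := boolP (phi k).
  have allE (r : 'I_n -> R) : \sum_(w | merge_sample w == v) event_mass r w =
      \sum_(w | merge_sample w == v) \prod_j r (w j).
    apply: eq_bigr => w /cardE; rewrite /event_mass => ->.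
    by rewrite (phi_up (leq_addr _ _) phik).
  by rewrite !allE sum_fibre_prod_preserved.
have phiE (c : bool) : phi (k + c) = c && phi k.+1.
  by case: c; rewrite ?addn0 ?addn1 // (negbTE nphik).
have [phik1 | nphik1] := boolP (phi k.+1); last first.
  by rewrite !big1 // => w /cardE; rewrite /event_mass => ->;
    rewrite phiE (negbTE nphik1) andbF.
have midE (r : 'I_n -> R) : \sum_(w | merge_sample w == v) event_mass r w =
    \sum_(w | merge_sample w == v)
      (if (a \in sample_set w) && (b \in sample_set w) then \prod_j r (w j) else 0).
  by apply: eq_bigr => w /cardE; rewrite /event_mass => ->; rewrite phiE phik1 andbT.
rewrite !midE.
have [av | nav] := boolP (a \in sample_set v); last first.
  by rewrite !big1 // => w /eqP wv; rewrite (negbTE (b_notin_fibre _)) ?andbF ?wv.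
rewrite !sum_fibre_both // sum_fibre_prod_preserved // lerD2l lerN2.
have prod_v (r : 'I_n -> R) : \prod_j r (v j) = \prod_j r (if v j == a then a else v j).
  by apply: eq_bigr => j _; case: eqVneq => [-> |].
have prod_a_to_b (r : 'I_n -> R) :
    \prod_j r (a_to_b v j) = \prod_j r (if v j == a then b else v j).
  by apply: eq_bigr => j _; rewrite ffunE.
rewrite !prod_v !prod_a_to_b !prod_replace_a -!mulrDl.
have -> : \prod_(j | v j != a) q (v j) = \prod_(j | v j != a) p (v j).
  by apply: eq_bigr => j vja; rewrite q_eq // neq_notin_sample_set.
by apply: ler_wpM2r; [apply: prodr_ge0 => j _; exact: p_ge0 | exact: qX].
Qed.

Lemma prob_iid_smoothing_le :
  prob_iid p (fun w : {ffun 'I_s -> 'I_n} => phi #|sample_set w|) <=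
  prob_iid q (fun w : {ffun 'I_s -> 'I_n} => phi #|sample_set w|).
Proof.
pose avoids_b (v : {ffun 'I_s -> 'I_n}) := b \notin sample_set v.
have fibre_avoids w : true -> avoids_b (merge_sample w).
  by move=> _; exact: notin_sample_set_merge.
rewrite /prob_iid big_mkcond [leRHS]big_mkcond.
rewrite (partition_big _ _ fibre_avoids) [leRHS](partition_big _ _ fibre_avoids).
by apply: ler_sum => v bv; exact: fibre_event_le.
Qed.

End Smoothing.
End MergeSamples.

Section Pinch.
Variables (R : realFieldType) (n : nat) (P : 'I_n -> R) (a b : 'I_n) (x : R).
Hypothesis neq_ab : a != b.

Definition pinch (i : 'I_n) : R :=
  if i == a then x else if i == b then P a + P b - x else P i.

Lemma pinch_out i : i != a -> i != b -> pinch i = P i.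
Proof. by rewrite /pinch => /negbTE -> /negbTE ->. Qed.

Lemma pinch_a : pinch a = x.
Proof. by rewrite /pinch eqxx. Qed.

Lemma pinch_b : pinch b = P a + P b - x.
Proof. by rewrite /pinch eq_sym (negbTE neq_ab) eqxx. Qed.

Lemma pinch_abD : pinch a + pinch b = P a + P b.
Proof. by rewrite pinch_a pinch_b addrC subrK. Qed.

Hypotheses (P_distr : is_distr P) (Pb_le : P b <= x) (le_Pa : x <= P a).

Lemma pinch_ge0 i : 0 <= pinch i.
Proof.
have [P_ge0 _] := P_distr.
case: (eqVneq i a) => [-> | ia]; first by rewrite pinch_a (le_trans (P_ge0 b)).
case: (eqVneq i b) => [-> | ib]; last by rewrite pinch_out.
by rewrite pinch_b addrAC addr_ge0 // subr_ge0.
Qed.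

Lemma pinch_distr : is_distr pinch.
Proof.
have [_ P_sum] := P_distr; split; first exact: pinch_ge0.
have sum_ab (r : 'I_n -> R) :
    \sum_i r i = r a + r b + \sum_(i | (i != a) && (i != b)) r i.
  by rewrite (bigD1 a) // (bigD1 b) 1?eq_sym //= addrA.
rewrite -P_sum !sum_ab pinch_abD; congr (_ + _).
by apply: eq_bigr => i /andP [ia ib]; exact: pinch_out.
Qed.

Lemma prob_iid_pinch_le (s : nat) (phi : nat -> bool) :
  (forall k l, (k <= l)%N -> phi k -> phi l) ->
  prob_iid P (fun w : {ffun 'I_s -> 'I_n} => phi #|sample_set w|) <=
  prob_iid pinch (fun w : {ffun 'I_s -> 'I_n} => phi #|sample_set w|).
Proof.
have [P_ge0 _] := P_distr; move=> phi_up.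
apply: (prob_iid_smoothing_le s neq_ab phi_up P_ge0 pinch_out pinch_abD) => m.
by rewrite pinch_a pinch_b; apply: ler_exprD_pinch.
Qed.

End Pinch.

Definition off_uniform (R : realFieldType) (n : nat) (P : 'I_n -> R) : {set 'I_n} :=
  [set i | P i != @unif R n i].

Section TowardsUniform.
Variables (R : realFieldType) (n s : nat) (phi : nat -> bool).
Hypothesis phi_up : forall k l, (k <= l)%N -> phi k -> phi l.

Let E := fun w : {ffun 'I_s -> 'I_n} => phi #|sample_set w|.

Lemma exists_smoothed_distr (P : 'I_n -> R) (i0 : 'I_n) :
  is_distr P -> P i0 != @unif R n i0 ->
  exists q, [/\ is_distr q, (#|off_uniform q| < #|off_uniform P|)%N
              & prob_iid P E <= prob_iid q E].
Proof.
move=> P_distr Pi0; have [_ P_sum] := P_distr; set u := @unif R n i0.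
have unifE i : @unif R n i = u by [].
have unif_sum : \sum_i @unif R n i = 1.
  rewrite /unif sumr_const card_ord -(mulr_natr n%:R^-1) mulVf // pnatr_eq0 -lt0n.
  exact: leq_ltn_trans (leq0n _) (ltn_ord i0).
have [a Pa] : exists a, @unif R n a < P a.
  by apply: (exists_ltr_of_sum_eq (i0 := i0)); rewrite ?P_sum // eq_sym.
have [b Pb] : exists b, P b < @unif R n b.
  by apply: (exists_ltr_of_sum_eq (i0 := i0)); rewrite ?P_sum.
rewrite !unifE in Pa Pb.
have neq_ab : a != b by apply: contraTneq (lt_trans Pb Pa) => ->; rewrite ltxx.
exists (pinch P a b u); split.
- exact: pinch_distr neq_ab P_distr (ltW Pb) (ltW Pa).
- have off_pinch : off_uniform (pinch P a b u) \subset off_uniform P :\ a.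
    apply/subsetP => i; rewrite !inE unifE.
    case: (eqVneq i a) => [-> | ia]; first by rewrite pinch_a eqxx.
    case: (eqVneq i b) => [-> _ | ib]; last by rewrite pinch_out.
    by rewrite lt_eqF.
  apply: leq_ltn_trans (subset_leq_card off_pinch) _.
  by rewrite (cardsD1 a (off_uniform P)) inE unifE gt_eqF.
- by apply: (prob_iid_pinch_le neq_ab P_distr (ltW Pb) (ltW Pa) s phi_up).
Qed.

Lemma prob_iid_le_unif (P : 'I_n -> R) :
  is_distr P -> prob_iid P E <= prob_iid (@unif R n) E.
Proof.
have [k] := ubnP #|off_uniform P|; elim: k P => // k IH P; rewrite ltnS => P_off P_distr.
have [off0 | [i0]] := set_0Vmem (off_uniform P).
  suff -> : prob_iid P E = prob_iid (@unif R n) E by [].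
  apply: eq_bigr => w _; apply: eq_bigr => j _.
  by have := in_set0 (w j); rewrite -off0 inE => /negbFE /eqP.
rewrite inE => Pi0; have [q [q_distr q_off Pq]] := exists_smoothed_distr P_distr Pi0.
by apply: le_trans Pq (IH q _ q_distr); apply: leq_trans q_off P_off.
Qed.

End TowardsUniform.

Theorem lemma3p3 (R : realFieldType) (n s1 : nat) (P : 'I_n -> R) (t : R) :
  (1 <= n)%N -> (1 <= s1)%N -> is_distr P ->
  prob_iid P (fun w : {ffun 'I_s1 -> 'I_n} => t <= @Un_mass R n (sample_set w))
  <= prob_iid (@unif R n) (fun w : {ffun 'I_s1 -> 'I_n} => t <= @Un_mass R n (sample_set w)).
Proof.
move=> _ _ P_distr.
apply: (@prob_iid_le_unif R n s1 (fun k => t <= k%:R / n%:R) _ P P_distr) => k l kl tk.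
by apply: le_trans tk _; rewrite ler_wpM2r ?invr_ge0 ?ler0n ?ler_nat.
Qed.
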